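(* Let $\Sigma$ be a finite alphabet with $|\Sigma|=q$, and let $X,Y\subseteq\Sigma^{\mathbb{Z}}$ be constrained systems with capacities satisfying $h(X)\le h(Y)$. Then \[R(X,Y)\ge H_q^{-1}\big(h(Y)-h(X)\big).\]
   Context: A constrained system is a set $X\subseteq\Sigma^{\mathbb{Z}}$ for which there is a finite directed graph with edges labeled by $\Sigma$ such that $X$ is the set of label sequences of bi-infinite directed paths in the graph. $\mathscr{B}_n(X)\subseteq\Sigma^n$ is the set of length-$n$ words appearing as consecutive subwords of elements of $X$. The capacity is $h(X)=\lim_{n\to\infty}\frac{1}{n}\log_q|\mathscr{B}_n(X)|$. With $d$ the Hamming distance, for $A,C\subseteq\Sigma^n$ let $R(C,A)=\max_{\overline{y}\in A}\min_{\overline{x}\in C}d(\overline{x},\overline{y})$, and $R(X,Y)=\liminf_{n\to\infty}\frac{1}{n}R(\mathscr{B}_n(X),\mathscr{B}_n(Y))$. $H_q(x)=x\log_q(q-1)-x\log_q x-(1-x)\log_q(1-x)$ (with $H_q(0)=0$), and $H_q^{-1}:[0,1]\to[0,1-\frac1q]$ is the inverse of the restriction of $H_q$ to $[0,1-\frac1q]$. *)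

From Stdlib Require Import Reals ZArith ClassicalEpsilon.
From mathcomp Require Import all_boot.
From Coquelicot Require Import Coquelicot.

Set Implicit Arguments.
Unset Strict Implicit.
Unset Printing Implicit Defensive.

Definition pbool (P : Prop) : bool :=
  if excluded_middle_informative P then true else false.

Record labeled_graph (Sigma : finType) := LabeledGraph {
  lg_V : finType;
  lg_E : finType;
  lg_src : lg_E -> lg_V;
  lg_dst : lg_E -> lg_V;
  lg_lab : lg_E -> Sigma }.

Definition presented_by (Sigma : finType) (G : labeled_graph Sigma)
  (x : Z -> Sigma) : Prop :=
  exists e : Z -> lg_E G,
    (forall i : Z, lg_dst (e i) = lg_src (e (i + 1)%Z)) /\
    (forall i : Z, x i = lg_lab (e i)).

Definition constrained_system (Sigma : finType) (X : (Z -> Sigma) -> Prop) : Prop :=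
  exists G : labeled_graph Sigma, forall x, X x <-> presented_by G x.

Definition blocks (Sigma : finType) (X : (Z -> Sigma) -> Prop) (n : nat)
  : {set n.-tuple Sigma} :=
  [set w : n.-tuple Sigma | pbool (exists x, X x /\ exists i : Z,
      forall k : 'I_n, tnth w k = x (i + Z.of_nat k)%Z)].

Definition hamming (Sigma : finType) (n : nat) (w v : n.-tuple Sigma) : nat :=
  \sum_(k < n) (tnth w k != tnth v k).

(* R(C,A) = max_{y in A} min_{x in C} d(x,y)
   (an empty min is taken to be n, the maximal possible distance) *)
Definition covrad (Sigma : finType) (n : nat) (C A : {set n.-tuple Sigma}) : nat :=
  \max_(y in A) \big[minn/n]_(x in C) hamming x y.

Local Open Scope R_scope.

Definition logb (q x : R) : R := ln x / ln q.

Definition capacity (Sigma : finType) (X : (Z -> Sigma) -> Prop) : R :=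
  real (Lim_seq (fun n => logb (INR #|Sigma|) (INR #|blocks X n|) / INR n)).

Definition RXY (Sigma : finType) (X Y : (Z -> Sigma) -> Prop) : R :=
  real (LimInf_seq (fun n => INR (covrad (blocks X n) (blocks Y n)) / INR n)).

Definition Hq (q x : R) : R :=
  if Req_EM_T x 0 then 0 else
  x * logb q (q - 1) - x * logb q x - (1 - x) * logb q (1 - x).

Definition Hq_inv (q y : R) : R :=
  epsilon (inhabits 0) (fun x => 0 <= x <= 1 - 1 / q /\ Hq q x = y).

From Stdlib Require Import Reals ZArith Lra Lia ClassicalEpsilon Ranalysis5.
From mathcomp Require Import all_boot all_order all_algebra.
From mathcomp Require Import Rstruct zify.
From Coquelicot Require Import Coquelicot.
Import Order.TTheory GRing.Theory Num.Theory.

Set Implicit Arguments.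
Unset Strict Implicit.
Unset Printing Implicit Defensive.

(* For 0 < p <= 1 - 1/q put al = p/(q-1) and be = 1 - p, so that be + (q-1) al = 1.  For
   a fixed word x the weights w(x,y) = al^d(x,y) be^(n-d(x,y)) then sum to 1 over all y,
   and w(x,y) >= al^r be^(n-r) as soon as d(x,y) <= r.  Hence, if every word of B lies
   within distance r <= p n of A, double counting gives |B| al^r be^(n-r) <= |A|, that is
   log_q |B| <= log_q |A| + n H_q(p).  Applied to B_n(X) and B_n(Y) along the infinitely
   many n with R(B_n(X), B_n(Y)) < p n, this gives h(Y) <= h(X) + H_q(p) for every
   p > R(X,Y); the capacities are genuine limits by Fekete's lemma, as
   |B_(m+n)| <= |B_m| |B_n|.  Since H_q increases on [0, 1 - 1/q], the theorem follows. *)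

Section HammingWeight.
Local Open Scope ring_scope.
Variables (Sigma : finType) (R : realDomainType) (al be : R).

Lemma sum_tuple_prod (n : nat) (F : 'I_n -> Sigma -> R) :
  \sum_(y : n.-tuple Sigma) \prod_(k < n) F k (tnth y k) =
  \prod_(k < n) \sum_(b : Sigma) F k b.
Proof.
rewrite bigA_distr_bigA (reindex (@finfun_of_tuple Sigma n)) /=.
  by apply: eq_bigr => y _; apply: eq_bigr => k _; rewrite ffunE.
exists (@tuple_of_finfun Sigma n) => x _.
  by rewrite finfun_of_tupleK.
by rewrite tuple_of_finfunK.
Qed.

Lemma hamming_card (n : nat) (x y : n.-tuple Sigma) :
  hamming x y = #|[pred k | tnth x k != tnth y k]|.
Proof.
rewrite -sum1_card [RHS]big_mkcond; apply: eq_bigr => k _.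
by rewrite inE; case: (_ != _).
Qed.

Lemma hamming_le (n : nat) (x y : n.-tuple Sigma) : (hamming x y <= n)%N.
Proof. by rewrite hamming_card -[X in (_ <= X)%N](card_ord n) max_card. Qed.

Definition letter_weight (a b : Sigma) : R := if a == b then be else al.

Definition word_weight (n : nat) (x y : n.-tuple Sigma) : R :=
  \prod_(k < n) letter_weight (tnth x k) (tnth y k).

Lemma word_weightE (n : nat) (x y : n.-tuple Sigma) :
  word_weight x y = al ^+ hamming x y * be ^+ (n - hamming x y).
Proof.
rewrite /word_weight (bigID (fun k => tnth x k != tnth y k)) /=.
rewrite (eq_bigr (fun _ => al)); last by move=> k /negbTE; rewrite /letter_weight => ->.
rewrite [X in _ * X](eq_bigr (fun _ => be)); last by move=> k /negPn; rewrite /letter_weight => ->.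
rewrite !prodr_const hamming_card; congr (_ * _ ^+ _).
rewrite -[X in (X - _)%N](card_ord n) -(cardC [pred k | tnth x k != tnth y k]) addKn.
by apply: eq_card => k; rewrite !inE.
Qed.

Lemma sum_word_weight (n : nat) (x : n.-tuple Sigma) :
  \sum_y word_weight x y = (be + (#|Sigma|.-1)%:R * al) ^+ n.
Proof.
rewrite (sum_tuple_prod (fun k b => letter_weight (tnth x k) b)).
rewrite (eq_bigr (fun _ => be + (#|Sigma|.-1)%:R * al)) ?prodr_const ?card_ord // => k _.
rewrite (bigD1 (tnth x k)) //= /letter_weight eqxx.
rewrite (eq_bigr (fun _ => al)); last by move=> b; rewrite eq_sym => /negbTE ->.
by rewrite sumr_const cardC1 mulr_natl.
Qed.

Hypotheses (al_ge0 : 0 <= al) (al_le_be : al <= be).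
Let be_ge0 : 0 <= be := le_trans al_ge0 al_le_be.

Lemma word_weight_ge0 (n : nat) (x y : n.-tuple Sigma) : 0 <= word_weight x y.
Proof. by apply: prodr_ge0 => k _; rewrite /letter_weight; case: (_ == _). Qed.

Lemma weight_le_dist (n d r : nat) : (d <= r)%N -> (r <= n)%N ->
  al ^+ r * be ^+ (n - r) <= al ^+ d * be ^+ (n - d).
Proof.
move=> le_dr le_rn.
have -> : (n - d = (r - d) + (n - r))%N by lia.
rewrite -{1}(subnKC le_dr) !exprD.
rewrite mulrA -!mulrA ler_wpM2l ?exprn_ge0 // ler_wpM2r ?exprn_ge0 //.
by rewrite lerXn2r.
Qed.

Lemma card_covered_le (n r : nat) (A B : {set n.-tuple Sigma}) : (r <= n)%N ->
  (forall y, y \in B -> exists2 x, x \in A & (hamming x y <= r)%N) ->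
  #|B|%:R * (al ^+ r * be ^+ (n - r)) <= #|A|%:R * (be + (#|Sigma|.-1)%:R * al) ^+ n.
Proof.
move=> le_rn covered.
apply: (@le_trans _ _ (\sum_(y in B) \sum_(x in A) word_weight x y)).
  rewrite mulr_natl -sumr_const; apply: ler_sum => y /covered [x xA le_xy].
  rewrite (bigD1 x) //= -[X in X <= _]addr0 lerD ?sumr_ge0 //.
    by rewrite word_weightE weight_le_dist ?hamming_le.
  by move=> ? _; apply: word_weight_ge0.
rewrite exchange_big /= mulr_natl -sumr_const; apply: ler_sum => x _.
rewrite -(sum_word_weight x) [X in _ <= X](bigID (mem B)) /= lerDl.
by apply: sumr_ge0 => y _; apply: word_weight_ge0.
Qed.

End HammingWeight.

Section Blocks.
Local Open Scope nat_scope.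
Variable Sigma : finType.

Lemma covrad_le (n : nat) (A B : {set n.-tuple Sigma}) : covrad A B <= n.
Proof.
apply/bigmax_leqP => y _; apply: (big_ind (fun v => v <= n)) => //.
  by move=> a b le_an _; rewrite geq_min le_an.
by move=> x _; apply: hamming_le.
Qed.

Lemma covrad_covers (n : nat) (A B : {set n.-tuple Sigma}) :
  covrad A B < n -> forall y, y \in B ->
  exists2 x, x \in A & hamming x y <= covrad A B.
Proof.
move=> lt_rn y yB.
have le_min : \big[minn/n]_(x in A) hamming x y <= covrad A B.
  exact: (@leq_bigmax_cond _ (mem B) (fun y => \big[minn/n]_(x in A) hamming x y)).
apply/exists_inP; apply: contraLR le_min => /exists_inPn far; rewrite -ltnNge.
apply: (big_ind (fun v => covrad A B < v)) => //.
  by move=> a b lt_a lt_b; rewrite leq_min lt_a lt_b.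
by move=> x xA; rewrite ltnNge far.
Qed.

Variable X : (Z -> Sigma) -> Prop.

Lemma in_blocks (n : nat) (w : n.-tuple Sigma) :
  w \in blocks X n <->
  exists x, X x /\ exists i : Z, forall k : 'I_n, tnth w k = x (Z.add i (Z.of_nat k)).
Proof. by rewrite inE /pbool; case: excluded_middle_informative. Qed.

Lemma card_blocks_le (n : nat) : #|blocks X n| <= #|Sigma| ^ n.
Proof. by rewrite -card_tuple max_card. Qed.

Lemma card_blocksD (m n : nat) :
  #|blocks X (m + n)| <= #|blocks X m| * #|blocks X n|.
Proof.
pose split_word (w : (m + n).-tuple Sigma) :=
  ([tuple tnth w (lshift n k) | k < m], [tuple tnth w (rshift m k) | k < n]).
have split_inj : injective split_word.
  move=> w w' /pair_equal_spec[eq_l eq_r]; apply: eq_from_tnth => i.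
  case: (split_ordP i) => j ->.
    by have := congr1 (fun t => tnth t j) eq_l; rewrite !tnth_mktuple.
  by have := congr1 (fun t => tnth t j) eq_r; rewrite !tnth_mktuple.
rewrite -cardsX -(card_imset _ split_inj); apply/subset_leq_card/subsetP.
move=> _ /imsetP[w /in_blocks[x [Xx [i occ]]] ->]; rewrite in_setX.
apply/andP; split; apply/in_blocks; exists x; split => //.
  by exists i => k; rewrite tnth_mktuple occ.
exists (Z.add i (Z.of_nat m)) => k; rewrite tnth_mktuple occ /=.
by congr x; lia.
Qed.

End Blocks.

Local Open Scope R_scope.

Lemma eventually_div_INR_lt (C eps : R) : 0 < eps ->
  eventually (fun n => C / INR n < eps).
Proof.
move=> eps_gt0; have [N large] := proj2 (is_lim_seq_spec _ _) is_lim_seq_INR (Rmax 0 (C / eps)).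
exists N => n /large lt_n; have n_gt0 : 0 < INR n by have := Rmax_l 0 (C / eps); lra.
apply/(Rmult_lt_reg_r (INR n)) => //; rewrite /Rdiv Rmult_assoc Rinv_l; last lra.
have := Rmax_r 0 (C / eps); have : C / eps * eps = C by field; lra.
nra.
Qed.

Lemma is_lim_seq_le_frequently (u v : nat -> R) (a b c : R) :
  is_lim_seq u a -> is_lim_seq v b ->
  (forall N, exists n, (N <= n)%N /\ u n <= v n + c) -> a <= b + c.
Proof.
move=> /is_lim_seq_spec lim_u /is_lim_seq_spec lim_v often.
apply: Rnot_lt_le => gap; pose eps := mkposreal ((a - b - c) / 2) ltac:(lra).
have [Nu close_u] := lim_u eps; have [Nv close_v] := lim_v eps.
have [n [/ssrnat.leP le_n le_uv]] := often (Nu + Nv)%N.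
have /Rabs_def2 := close_u n ltac:(lia); have /Rabs_def2 := close_v n ltac:(lia).
rewrite /= in close_u close_v *; lra.
Qed.

Section Fekete.
Variable s : nat -> R.
Hypotheses (s_ge0 : forall n, 0 <= s n) (s_subadd : forall m n, s (m + n)%N <= s m + s n).

Lemma subadditive_mulD (k m j : nat) : s (k * m + j)%N <= INR k * s m + s j.
Proof.
elim: k => [|k IH]; first by rewrite mul0n add0n /=; lra.
by rewrite mulSn -addnA S_INR; have := s_subadd m (k * m + j); lra.
Qed.

Lemma subadditive_le_div (m n : nat) : (0 < m)%N ->
  s n <= INR n / INR m * s m + (s 0%N + INR m * s 1%N).
Proof.
move=> m_gt0; have m_pos : 0 < INR m by apply/lt_0_INR/ssrnat.ltP.
have := subadditive_mulD (n %/ m) m (n %% m); rewrite -divn_eq.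
have := subadditive_mulD (n %% m) 1 0; rewrite muln1 addn0.
have : INR (n %% m) <= INR m by apply/le_INR/ssrnat.leP/ltnW; rewrite ltn_mod.
have : INR (n %/ m) <= INR n / INR m.
  apply: (Rmult_le_reg_r (INR m)) => //; rewrite -mult_INR /Rdiv Rmult_assoc Rinv_l; last lra.
  by rewrite Rmult_1_r; apply/le_INR/ssrnat.leP; rewrite leq_divM.
have := s_ge0 m; have := s_ge0 1%N; nra.
Qed.

Lemma subadditive_ratio_le (m n : nat) : (0 < m)%N -> (0 < n)%N ->
  s n / INR n <= s m / INR m + (s 0%N + INR m * s 1%N) / INR n.
Proof.
move=> m_gt0 n_gt0; have m_pos : 0 < INR m by apply/lt_0_INR/ssrnat.ltP.
have n_pos : 0 < INR n by apply/lt_0_INR/ssrnat.ltP.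
apply: (Rmult_le_reg_r (INR n)) => //.
have -> : s n / INR n * INR n = s n by field; lra.
have -> : (s m / INR m + (s 0%N + INR m * s 1%N) / INR n) * INR n =
          INR n / INR m * s m + (s 0%N + INR m * s 1%N) by field; lra.
exact: subadditive_le_div.
Qed.

Lemma fekete : exists l : R, is_lim_seq (fun n => s n / INR n) l.
Proof.
have rate_ge0 n : 0 <= s n / INR n.
  case: n => [|n]; first by rewrite /= Rdiv_0_r; lra.
  by apply: Rdiv_le_0_compat => //; apply: lt_0_INR; lia.
have [[l| |] inf_l] := ex_inf_seq (fun k => s k.+1 / INR k.+1).
- exists l; apply/is_lim_seq_spec => eps.
  have half_gt0 : 0 < eps / 2 by have := cond_pos eps; lra.
  have [_ [m rate_m]] := inf_l (mkposreal _ half_gt0).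
  have [N small] := @eventually_div_INR_lt (s 0%N + INR m.+1 * s 1%N) _ half_gt0.
  exists N.+1 => -[|n] le_n; first by lia.
  have upper := @subadditive_ratio_le m.+1 n.+1 (ltn0Sn m) (ltn0Sn n).
  have lower : l - eps < s n.+1 / INR n.+1 by have [+ _] := inf_l eps; apply.
  have small_n := small n.+1 ltac:(lia).
  change (s m.+1 / INR m.+1 < l + eps / 2) in rate_m.
  apply: Rabs_def1; lra.
- by have := inf_l (s 1%N / INR 1) 0%N; rewrite /=; lra.
- by have [n] := inf_l 0; have := rate_ge0 n.+1; rewrite /=; lra.
Qed.

End Fekete.

Lemma LimInf_seq_bounded (u : nat -> R) (a b : R) : (forall n, a <= u n <= b) ->
  a <= real (LimInf_seq u) <= b /\ is_LimInf_seq u (real (LimInf_seq u)).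
Proof.
move=> u_ab; have lo := LimInf_le (fun _ => a) u (ex_intro _ 0%N (fun n _ => proj1 (u_ab n))).
have hi := LimInf_le u (fun _ => b) (ex_intro _ 0%N (fun n _ => proj2 (u_ab n))).
rewrite !LimInf_seq_const in lo hi.
have := proj2_sig (ex_LimInf_seq u); rewrite -/(LimInf_seq u).
by case: (LimInf_seq u) lo hi.
Qed.

Lemma LimInf_seq_frequently_lt (u : nat -> R) (a b p : R) :
  (forall n, a <= u n <= b) -> real (LimInf_seq u) < p ->
  forall N, exists n, (N <= n)%N /\ u n < p.
Proof.
move=> u_ab lt_p N; have [_ inf_u] := LimInf_seq_bounded u_ab.
have [often _] := inf_u (mkposreal _ (proj2 (Rlt_0_minus _ _) lt_p)).
have [n [/ssrnat.leP le_n lt_n]] := often N; exists n; split => //=.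
by rewrite /= in lt_n; lra.
Qed.

Lemma ln_0 : ln 0 = 0.
Proof. by rewrite /ln; case: Rlt_dec => [lt00|] //; case: (Rlt_irrefl _ lt00). Qed.

Lemma ln_le_sub1 (u : R) : 0 < u -> ln u <= u - 1.
Proof. by move=> u_gt0; have := exp_ineq1_le (ln u); rewrite exp_ln //; lra. Qed.

Lemma ln_ge0 (u : R) : 1 <= u -> 0 <= ln u.
Proof. by move=> u_ge1; rewrite -ln_1; apply: ln_le; lra. Qed.

Lemma ln_gt0 (u : R) : 1 < u -> 0 < ln u.
Proof. by move=> u_gt1; rewrite -ln_1; apply: ln_increasing; lra. Qed.

Lemma ln_le0 (u : R) : 0 < u <= 1 -> ln u <= 0.
Proof. by move=> u_01; rewrite -ln_1; apply: ln_le; lra. Qed.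

Lemma ln_INR_ge0 (k : nat) : 0 <= ln (INR k).
Proof.
case: k => [|k]; first by rewrite ln_0; lra.
by apply: ln_ge0; rewrite S_INR; have := pos_INR k; lra.
Qed.

Lemma INR_expn (m n : nat) : INR (m ^ n)%N = INR m ^ n.
Proof. by elim: n => [|n IH] //=; rewrite expnS mult_INR IH. Qed.

Lemma ln_INR_le (a b : nat) : (a <= b)%N -> ln (INR a) <= ln (INR b).
Proof.
case: a => [|a] le_ab; first by rewrite ln_0; apply: ln_INR_ge0.
by apply: ln_le; [apply: lt_0_INR; lia | apply/le_INR/ssrnat.leP].
Qed.

Lemma ln_INR_le_mul (a b c : nat) : (a <= b * c)%N -> ln (INR a) <= ln (INR b) + ln (INR c).
Proof.
case: a => [|a] le_abc; first by rewrite ln_0; have := ln_INR_ge0 b; have := ln_INR_ge0 c; lra.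
have b_gt0 : 0 < INR b by apply/lt_0_INR; lia.
have c_gt0 : 0 < INR c by apply/lt_0_INR; lia.
by rewrite -ln_mult // -mult_INR; apply: ln_INR_le.
Qed.

Section Entropy.
Variable q : R.
Hypothesis q_ge2 : 2 <= q.

Let lnq_gt0 : 0 < ln q.
Proof. by apply: ln_gt0; lra. Qed.

Let inv_q_bounds : 0 < 1 / q <= 1 / 2.
Proof.
split; first by apply: Rdiv_lt_0_compat; lra.
by apply: Rmult_le_compat_l; [lra | apply: Rinv_le_contravar; lra].
Qed.

Definition Hln (t : R) : R := t * ln (q - 1) - t * ln t - (1 - t) * ln (1 - t).

Lemma Hq_Hln (t : R) : t <> 0 -> Hq q t = Hln t / ln q.
Proof.
move=> t_neq0; rewrite /Hq; case: (Req_dec_T t 0) => [t0 | t_ne0] /=; first by case: t_neq0.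
by rewrite /logb /Hln; field; lra.
Qed.

Lemma Hln_derive (t : R) : 0 < t < 1 ->
  derivable_pt_lim Hln t (ln (q - 1) - ln t + ln (1 - t)).
Proof.
move=> t_01; apply/is_derive_Reals; rewrite /Hln.
auto_derive; first by repeat split; lra.
by rewrite /Rminus; field; lra.
Qed.

Lemma Hln_continuity (t : R) : 0 < t < 1 -> continuity_pt Hln t.
Proof. by move=> t_01; apply: derivable_continuous_pt; eexists; apply: Hln_derive. Qed.

Lemma Hln_lt (p x : R) : 0 < p -> p < x -> x <= 1 - 1 / q -> Hln p < Hln x.
Proof.
move=> p_gt0 lt_px x_le.
have [c [mvt c_in]] := MVT_cor2 Hln _ _ _ lt_px
  (fun c (c_in : p <= c <= x) => Hln_derive (t := c) ltac:(lra)).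
suff : 0 < ln (q - 1) - ln c + ln (1 - c) by nra.
have : ln c < ln ((q - 1) * (1 - c)).
  apply: ln_increasing; first lra.
  have -> : (q - 1) * (1 - c) = c + q * (1 - 1 / q - c) by field; lra.
  have : 0 < q * (1 - 1 / q - c) by apply: Rmult_lt_0_compat; lra.
  lra.
by rewrite ln_mult; lra.
Qed.

Lemma Hln_ge0 (t : R) : 0 < t < 1 -> 0 <= Hln t.
Proof.
move=> t_01; have := ln_ge0 (u := q - 1) ltac:(lra).
have := ln_le0 (u := t) ltac:(lra); have := ln_le0 (u := 1 - t) ltac:(lra).
rewrite /Hln; nra.
Qed.

Lemma Hln_max : Hln (1 - 1 / q) = ln q.
Proof.
rewrite /Hln (_ : 1 - (1 - 1 / q) = / q); last by field; lra.
rewrite (_ : 1 - 1 / q = (q - 1) / q); last by field; lra.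
by rewrite ln_div ?ln_Rinv; try lra; field; lra.
Qed.

Lemma Hln_small (y : R) : 0 < y -> exists e, 0 < e <= / 4 /\ Hln e < y.
Proof.
move=> y_gt0; have lnq1 := ln_ge0 (u := q - 1) ltac:(lra).
pose K := ln (q - 1) + 3; pose d := Rmin (/ 2) (y / (2 * K)).
have d_gt0 : 0 < d by apply: Rmin_pos; [lra | apply: Rdiv_lt_0_compat; rewrite /K; lra].
have d_le : d <= / 2 := Rmin_l _ _.
have dK : d * K <= y / 2.
  have -> : y / 2 = y / (2 * K) * K by field; rewrite /K; lra.
  by apply: Rmult_le_compat_r; [rewrite /K; lra | apply: Rmin_r].
exists (d * d); split; first by split; nra.
have ent_lo : - (d * d * ln (d * d)) <= 2 * d.
  have := ln_le_sub1 (Rinv_0_lt_compat d d_gt0); rewrite ln_Rinv // ln_mult //.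
  have : d * d * (/ d - 1) = d - d * d by field; lra.
  nra.
have ent_hi : - ((1 - d * d) * ln (1 - d * d)) <= d * d.
  have dd_lt1 : 0 < 1 - d * d by nra.
  have := ln_le_sub1 (Rinv_0_lt_compat _ dd_lt1); rewrite ln_Rinv //.
  have : (1 - d * d) * (/ (1 - d * d) - 1) = d * d by field; lra.
  nra.
rewrite /Hln /K in dK *; nra.
Qed.

Lemma Hq_lt (p x : R) : 0 < p -> p < x -> x <= 1 - 1 / q -> Hq q p < Hq q x.
Proof.
move=> p_gt0 lt_px x_le; rewrite !Hq_Hln; try lra.
by apply: Rmult_lt_compat_r; [apply: Rinv_0_lt_compat | apply: Hln_lt].
Qed.

Lemma Hq_invP (y : R) : 0 <= y <= 1 ->
  0 <= Hq_inv q y <= 1 - 1 / q /\ Hq q (Hq_inv q y) = y.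
Proof.
move=> y_01.
suff [x x_spec] : exists x, 0 <= x <= 1 - 1 / q /\ Hq q x = y.
  exact: (epsilon_spec (inhabits 0) (fun x => 0 <= x <= 1 - 1 / q /\ Hq q x = y)
            (ex_intro _ x x_spec)).
have [-> | y_neq0] := Req_EM_T y 0.
  by exists 0; split; [lra | rewrite /Hq; case: Req_dec_T].
have [-> | y_neq1] := Req_EM_T y 1.
  by exists (1 - 1 / q); split; [lra | rewrite Hq_Hln ?Hln_max; [field | ]; lra].
have [e [e_in He]] := Hln_small (Rmult_lt_0_compat y (ln q) ltac:(lra) lnq_gt0).
have cont a : e <= a <= 1 - 1 / q -> continuity_pt (fun t => Hln t - y * ln q) a.
  move=> a_in; apply: continuity_pt_minus; first by apply: Hln_continuity; lra.
  exact: continuity_pt_const.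
have [z [z_in Hz]] := IVT_interv _ _ _ cont ltac:(lra) ltac:(lra) ltac:(rewrite /= Hln_max; nra).
exists z; split; first lra.
by rewrite Hq_Hln; [rewrite (_ : Hln z = y * ln q); [field|] | ]; lra.
Qed.

Lemma Hq_inv_le (r y : R) : 0 <= r -> 0 <= y <= 1 ->
  (forall p, r < p <= 1 - 1 / q -> y <= Hq q p) -> Hq_inv q y <= r.
Proof.
move=> r_ge0 y_01 Hq_ge; have [x_in Hq_x] := Hq_invP y_01.
apply: Rnot_lt_le => lt_rx; pose p := (r + Hq_inv q y) / 2.
have := Hq_ge p ltac:(rewrite /p; lra).
have := Hq_lt (p := p) (x := Hq_inv q y) ltac:(rewrite /p; lra) ltac:(rewrite /p; lra) (proj2 x_in).
lra.
Qed.

End Entropy.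

Section Capacity.
Variables (Sigma : finType) (X : (Z -> Sigma) -> Prop).
Hypothesis Sigma_gt1 : (1 < #|Sigma|)%N.

Let lnq_gt0 : 0 < ln (INR #|Sigma|).
Proof. by apply/ln_gt0/(lt_INR 1)/ssrnat.ltP. Qed.

Let block_rate (n : nat) : R := logb (INR #|Sigma|) (INR #|blocks X n|).

Lemma block_rate_bounds (n : nat) : 0 <= block_rate n / INR n <= 1.
Proof.
case: n => [|n]; first by rewrite /= Rdiv_0_r; lra.
have n_gt0 : 0 < INR n.+1 by apply: lt_0_INR; lia.
split; first by do 2 apply: Rdiv_le_0_compat => //; apply: ln_INR_ge0.
have ln_card_le : ln (INR #|blocks X n.+1|) <= INR n.+1 * ln (INR #|Sigma|).
  by rewrite -ln_pow -?INR_expn; [apply/ln_INR_le/card_blocks_le | apply: lt_0_INR; lia].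
apply: (Rmult_le_reg_r (INR n.+1 * ln (INR #|Sigma|))); first exact: Rmult_lt_0_compat.
by rewrite /block_rate /logb Rmult_1_l; field_simplify; lra.
Qed.

Lemma capacity_is_lim : is_lim_seq (fun n => block_rate n / INR n) (capacity X).
Proof.
have rate_ge0 n : 0 <= block_rate n by apply: Rdiv_le_0_compat => //; apply: ln_INR_ge0.
have rate_subadd m n : block_rate (m + n)%N <= block_rate m + block_rate n.
  rewrite /block_rate /logb -Rdiv_plus_distr; apply: Rmult_le_compat_r.
    exact/Rlt_le/Rinv_0_lt_compat.
  exact/ln_INR_le_mul/card_blocksD.
have [l lim_l] := fekete rate_ge0 rate_subadd.
by rewrite /capacity -/block_rate (is_lim_seq_unique _ _ lim_l).
Qed.

Lemma capacity_bounds : 0 <= capacity X <= 1.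
Proof.
split.
  exact: is_lim_seq_le (fun n => proj1 (block_rate_bounds n)) (is_lim_seq_const 0) capacity_is_lim.
exact: is_lim_seq_le (fun n => proj2 (block_rate_bounds n)) capacity_is_lim (is_lim_seq_const 1).
Qed.

End Capacity.

Section Covering.
Variables (Sigma : finType) (n : nat) (A B : {set n.-tuple Sigma}) (p : R).
Let q : R := INR #|Sigma|.
Hypotheses (Sigma_gt1 : (1 < #|Sigma|)%N) (p_in : 0 < p <= 1 - 1 / q).

Let q_ge2 : 2 <= q.
Proof. by apply: (le_INR 2); apply/ssrnat.leP. Qed.

Let p_lt1 : p < 1.
Proof. have inv_q : 0 < 1 / q by apply: Rdiv_lt_0_compat; lra. lra. Qed.

Let al : R := p / (q - 1).
Let be : R := 1 - p.

Let al_gt0 : 0 < al.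
Proof. by apply: Rdiv_lt_0_compat; lra. Qed.

Let al_le_be : al <= be.
Proof.
apply: (Rmult_le_reg_r (q - 1)); first lra.
rewrite /al /be /Rdiv Rmult_assoc Rinv_l; last lra.
have : 1 / q * q = 1 by field; lra.
nra.
Qed.

Lemma card_weight_le_covering (r : nat) : (r <= n)%N ->
  (forall y, y \in B -> exists2 x, x \in A & (hamming x y <= r)%N) ->
  INR #|B| * (al ^ r * be ^ (n - r)) <= INR #|A|.
Proof.
move=> r_le_n covered.
have := @card_covered_le Sigma R al be ltac:(by apply/RleP; apply: Rlt_le) ltac:(by apply/RleP)
          n r A B r_le_n covered.
rewrite -!RpowE -!INRE.
have -> : INR (#|Sigma|.-1) = q - 1 by rewrite /q -(prednK (ltnW Sigma_gt1)) S_INR /=; lra.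
have total : be + (q - 1) * al = 1 by rewrite /al /be; field; lra.
by move/RleP; rewrite -!RmultE -!RplusE total pow1 Rmult_1_r.
Qed.

Lemma ln_card_le_covering (r : nat) : INR r <= p * INR n -> (r <= n)%N ->
  (forall y, y \in B -> exists2 x, x \in A & (hamming x y <= r)%N) ->
  ln (INR #|B|) <= ln (INR #|A|) + INR n * Hln q p.
Proof.
move=> r_le_pn r_le_n covered; have := card_weight_le_covering r_le_n covered.
have Hp_ge0 : 0 <= Hln q p by apply: Hln_ge0 => //; lra.
have n_ge0 := pos_INR n.
case: #|B| => [_ | b weighted]; first by rewrite ln_0; have := ln_INR_ge0 #|A|; nra.
have b_gt0 : 0 < INR b.+1 by apply: lt_0_INR; lia.
have be_gt0 : 0 < be by rewrite /be; lra.
have W_gt0 : 0 < al ^ r * be ^ (n - r) by apply: Rmult_lt_0_compat; apply: pow_lt.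
have ln_W : ln (INR b.+1) + ln (al ^ r * be ^ (n - r)) <= ln (INR #|A|).
  by rewrite -ln_mult //; apply: ln_le => //; apply: Rmult_lt_0_compat.
have ln_W_eq : ln (al ^ r * be ^ (n - r)) = INR r * ln al + (INR n - INR r) * ln be.
  by rewrite ln_mult ?ln_pow ?minus_INR //; [apply/ssrnat.leP | apply: pow_lt ..].
have ln_al : ln al = ln p - ln (q - 1) by rewrite /al ln_div; lra.
(* [r ln al + (n - r) ln be >= n (p ln al + (1 - p) ln be) = - n Hln p],
   because [r <= p n] and [ln al <= ln be] *)
have : (p * INR n - INR r) * (ln al - ln be) <= 0.
  by have := ln_le _ _ al_gt0 al_le_be; nra.
rewrite ln_W_eq ln_al /be /Hln in ln_W *; nra.
Qed.

Lemma block_rate_le_covrad : (0 < n)%N -> INR (covrad A B) / INR n < p ->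
  logb q (INR #|B|) / INR n <= logb q (INR #|A|) / INR n + Hq q p.
Proof.
move=> n_gt0 small_covrad; have n_pos : 0 < INR n by apply/lt_0_INR/ssrnat.ltP.
have lnq_gt0 : 0 < ln q by apply: ln_gt0; lra.
have r_lt_pn : INR (covrad A B) < p * INR n by apply/Rlt_div_l.
have r_lt_n : (covrad A B < n)%N by apply/ssrnat.ltP; apply: INR_lt; nra.
have := ln_card_le_covering (Rlt_le _ _ r_lt_pn) (ltnW r_lt_n) (covrad_covers r_lt_n).
rewrite Hq_Hln; [|lra|lra].
have -> : logb q (INR #|A|) / INR n + Hln q p / ln q =
          (ln (INR #|A|) + INR n * Hln q p) / ln q / INR n by rewrite /logb; field; lra.
move=> ln_le; rewrite /logb /Rdiv.
by do 2 (apply: Rmult_le_compat_r; first by apply/Rlt_le/Rinv_0_lt_compat).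
Qed.

End Covering.

Lemma covrad_rate_bounds (Sigma : finType) (n : nat) (A B : {set n.-tuple Sigma}) :
  0 <= INR (covrad A B) / INR n <= 1.
Proof.
case: n A B => [|n] A B; first by rewrite /= Rdiv_0_r; lra.
have n_gt0 : 0 < INR n.+1 by apply: lt_0_INR; lia.
split; first by apply: Rdiv_le_0_compat => //; apply: pos_INR.
apply/Rle_div_l => //; rewrite Rmult_1_l.
exact/le_INR/ssrnat.leP/covrad_le.
Qed.

Section CoveringRadius.
Variables (Sigma : finType) (X Y : (Z -> Sigma) -> Prop).

Lemma RXY_ge0 : 0 <= RXY X Y.
Proof.
by have [[]] := LimInf_seq_bounded (fun n => covrad_rate_bounds (blocks X n) (blocks Y n)).
Qed.

Lemma capacity_gap_le_Hq (p : R) : (1 < #|Sigma|)%N ->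
  RXY X Y < p <= 1 - 1 / INR #|Sigma| -> capacity Y - capacity X <= Hq (INR #|Sigma|) p.
Proof.
move=> Sigma_gt1 [lt_Rp p_le]; have R_ge0 := RXY_ge0.
have often := LimInf_seq_frequently_lt
  (fun n => covrad_rate_bounds (blocks X n) (blocks Y n)) lt_Rp.
suff : capacity Y <= capacity X + Hq (INR #|Sigma|) p by lra.
apply: is_lim_seq_le_frequently
  (capacity_is_lim (X := Y) Sigma_gt1) (capacity_is_lim (X := X) Sigma_gt1) _ => N.
have [n [le_n small_n]] := often N.+1; exists n; split; first exact: ltnW.
by apply: block_rate_le_covrad => //; [lra | exact: leq_ltn_trans le_n].
Qed.

End CoveringRadius.

Local Close Scope R_scope.

Theorem proposition10 (Sigma : finType) (X Y : (Z -> Sigma) -> Prop) :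
  (1 < #|Sigma|) ->
  constrained_system X -> constrained_system Y ->
  Rle (capacity X) (capacity Y) ->
  Rge (RXY X Y) (Hq_inv (INR #|Sigma|) (Rminus (capacity Y) (capacity X))).
Proof.
move=> Sigma_gt1 _ _ le_cap; apply: Rle_ge.
have q_ge2 : Rle 2 (INR #|Sigma|) by apply: (le_INR 2); apply/ssrnat.leP.
have [capX_ge0 capX_le1] := capacity_bounds X Sigma_gt1.
have [capY_ge0 capY_le1] := capacity_bounds Y Sigma_gt1.
apply: (Hq_inv_le q_ge2 (RXY_ge0 X Y)); first lra.
by move=> p; apply: capacity_gap_le_Hq.
Qed.
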